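(* For each $C>0$ and $K>1$ there exists $D=D(K,C)>C$ with the following property. Let $\kappa$ be a $K$-contracting axis from $x$ to $x'$ and $\eta$ a $K$-contracting axis from $y'$ to $y$ in a geodesic metric space $X$, and suppose $\operatorname{diam}(x'\cup\pi_\kappa(\eta))<C$ and $\operatorname{diam}(y'\cup\pi_\eta(\kappa))<C$. Then for every $p\in X$, the inequalities $\operatorname{diam}(\pi_\eta(p)\cup y')\ge D$ and $\operatorname{diam}(\pi_\kappa(p)\cup x')\ge D$ cannot hold simultaneously. Moreover, $\operatorname{diam}(\pi_\eta(p)\cup y')\ge D$ implies $d(p,\kappa)\ge d(p,\eta)+K$.
   Context: $X$ is a geodesic metric space. For $A\subseteq X$ and $z\in X$, $\pi_A(z)=\{a\in A:d(z,a)=d(z,A)\}$, and $\pi_A(B)=\bigcup_{b\in B}\pi_A(b)$. A set $A$ is $K$-contracting if $\pi_A(z)\ne\emptyset$ for all $z$ and for $x,y$ with $d(x,y)\le d(x,A)-K$ one has $\operatorname{diam}(\pi_A(x)\cup\pi_A(y))\le K$. A $K$-quasigeodesic is a map $\gamma$ from an interval of $\mathbb R$ or a set of consecutive integers to $X$ with $|s-t|/K-K\le d(\gamma(s),\gamma(t))\le K|s-t|+K$; a $K$-contracting axis is a $K$-quasigeodesic whose image is $K$-contracting; ''from $a$ to $b$'' means initial point $a$ and terminal point $b$. Projections onto and distances to a path refer to its image. *)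

From HB Require Import structures.
From mathcomp Require Import all_boot all_order all_algebra.
From mathcomp Require Import all_classical all_reals.
From mathcomp Require Import ereal set_interval.
Set Implicit Arguments. Unset Strict Implicit. Unset Printing Implicit Defensive.
Import Order.TTheory GRing.Theory Num.Theory.
Local Open Scope classical_set_scope.
Local Open Scope ring_scope.

Section Defs.
Variables (R : realType) (X : Type) (d : X -> X -> R).

Definition is_metric : Prop :=
  (forall x y, 0 <= d x y) /\ (forall x y, d x y = 0 <-> x = y) /\
  (forall x y, d x y = d y x) /\ (forall x y z, d x z <= d x y + d y z).

Definition is_geodesic : Prop :=
  forall x y, exists g : R -> X, g 0 = x /\ g (d x y) = y /\
    forall s t, 0 <= s <= d x y -> 0 <= t <= d x y -> d (g s) (g t) = `|s - t|.

Definition setdist (z : X) (A : set X) : R := inf [set d z a | a in A].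

Definition cproj (A : set X) (z : X) : set X :=
  [set a | A a /\ d z a = setdist z A].

Definition projset (A B : set X) : set X := [set a | exists2 b, B b & cproj A b a].

Definition sdiam (S : set X) : \bar R :=
  ereal_sup [set r | exists a b, S a /\ S b /\ r = (d a b)%:E].

Definition contracting (K : R) (A : set X) : Prop :=
  (forall z, cproj A z !=set0) /\
  forall x y, d x y <= setdist x A - K ->
    (sdiam (cproj A x `|` cproj A y) <= K%:E)%E.

Definition int_dom (m n : int) : set R :=
  [set t | exists k : int, t = k%:~R /\ (m <= k <= n)%R].

Definition path_domain (I : set R) (a b : R) : Prop :=
  a <= b /\
  (I = `[a, b]%classic \/ exists m n : int, a = m%:~R /\ b = n%:~R /\ I = int_dom m n).

Definition quasigeodesic (K : R) (I : set R) (g : R -> X) : Prop :=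
  forall s t, I s -> I t ->
    `|s - t| / K - K <= d (g s) (g t) <= K * `|s - t| + K.

Definition contracting_axis (K : R) (I : set R) (g : R -> X) (x x' : X) : Prop :=
  exists a b, path_domain I a b /\ g a = x /\ g b = x' /\
    quasigeodesic K I g /\ contracting K (g @` I).

End Defs.

From HB Require Import structures.
From mathcomp Require Import all_boot all_order all_algebra.
From mathcomp Require Import all_classical all_reals.
From mathcomp Require Import ereal set_interval.
From mathcomp Require Import lra.
Import Order.TTheory GRing.Theory Num.Theory.
Local Open Scope classical_set_scope.
Local Open Scope ring_scope.
Set Implicit Arguments. Unset Strict Implicit.

(* If the
   projections of p and q to a K-contracting set A are more than 11K apart,
   then d(p,q) >= d(p,A) + K: otherwise walk from p towards q, stop K short
   of the distance d(p,A), and compare the projections of p, q and of that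
   point.  Taking q a closest point of kappa to p, if
   d(p,kappa) < d(p,eta) + K then every point of pi_eta(p) is within
   11K + C of y', since pi_eta(kappa) is C-close to y'; so
   diam(pi_eta(p) u y') <= 22K + 2C < D := 22K + 2C + 1.  With the
   symmetric statement, both diameters being large would give K <= -K. *)

Section MetricSpace.
Variables (R : realType) (X : Type) (d : X -> X -> R).
Hypothesis d_metric : is_metric d.

Lemma metric_ge0 x y : 0 <= d x y. Proof. by case: d_metric. Qed.
Lemma metric_xx x : d x x = 0. Proof. by case: d_metric => _ [dP _]; apply/dP. Qed.
Lemma metric_sym x y : d x y = d y x. Proof. by case: d_metric => _ [_ []]. Qed.
Lemma metric_triangle x y z : d x z <= d x y + d y z.
Proof. by case: d_metric => _ [_ []]. Qed.

Lemma setdist_le_dist z (A : set X) a : A a -> setdist d z A <= d z a.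
Proof.
move=> Aa; apply: ge_inf; last by exists a.
by exists 0 => _ [b _ <-]; exact: metric_ge0.
Qed.

Lemma sdiam_ge (S : set X) a b : S a -> S b -> ((d a b)%:E <= sdiam d S)%E.
Proof. by move=> Sa Sb; apply: ereal_sup_ubound; exists a, b. Qed.

Lemma sdiam_le (S : set X) M :
  (forall a b, S a -> S b -> d a b <= M) -> (sdiam d S <= M%:E)%E.
Proof.
move=> SM; apply: ge_ereal_sup => _ [a [b [Sa [Sb ->]]]].
by rewrite lee_fin; apply: SM.
Qed.

Lemma sdiam_setU1_le (S : set X) y M : 0 <= M ->
  (forall a, S a -> d a y <= M) -> (sdiam d (S `|` [set y]) <= (2 * M)%:E)%E.
Proof.
move=> M0 SM; apply: sdiam_le => a b [Sa|->] [Sb|->].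
- have := metric_triangle a y b; rewrite (metric_sym y b).
  have := SM a Sa; have := SM b Sb; lra.
- by have := SM a Sa; lra.
- by rewrite metric_sym; have := SM b Sb; lra.
- by rewrite metric_xx; lra.
Qed.

Lemma geodesic_point p q t : is_geodesic d -> 0 <= t <= d p q ->
  exists z, d p z = t /\ d z q = d p q - t.
Proof.
move=> geo /andP[t0 tpq]; have [g [g0 [g1 gI]]] := geo p q.
have pq0 := metric_ge0 p q.
exists (g t); split.
- by rewrite -{1}g0 gI ?lexx ?t0 ?tpq // sub0r normrN ger0_norm.
- rewrite -{1}g1 gI ?lexx ?t0 ?tpq ?pq0 // ler0_norm ?opprB //; lra.
Qed.

Lemma cproj_dist_le (A : set X) z a b : cproj d A z a -> A b -> d z a <= d z b.
Proof. by move=> [_ ->]; apply: setdist_le_dist. Qed.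

Lemma cproj_le_twice (A : set X) z a b : cproj d A z a -> A b -> d a b <= 2 * d z b.
Proof.
move=> za Ab; have := cproj_dist_le za Ab.
have := metric_triangle a z b; rewrite (metric_sym a z); lra.
Qed.

Section Contracting.
Variables (K : R) (A : set X).
Hypothesis A_contr : contracting d K A.

Lemma contracting_cproj_le x y a c : d x y <= setdist d x A - K ->
  cproj d A x a -> cproj d A y c -> d a c <= K.
Proof.
move=> xy xa yc; rewrite -lee_fin; apply: le_trans (A_contr.2 x y xy).
by apply: sdiam_ge; [left|right].
Qed.

Lemma contracting_cproj_near p q a b : 0 <= K -> is_geodesic d ->
  d p q < setdist d p A + K -> cproj d A p a -> cproj d A q b -> d a b <= 11 * K.
Proof.
move=> K0 geo pq pa qb; have pq0 := metric_ge0 p q.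
have [Aa pa_eq] := pa; have [Ab qb_eq] := qb.
set r := setdist d p A in pq pa_eq; set s := setdist d q A in qb_eq.
have [pq_far | pq_near] := leP (d p q) (r - K).
  by have := contracting_cproj_le pq_far pa qb; lra.
have [r_small | r_large] := ltP r K.
  have := cproj_le_twice qb Aa; rewrite metric_sym.
  have := metric_triangle q p a; rewrite (metric_sym q p); lra.
have [z [pz zq]] : exists z, d p z = r - K /\ d z q = d p q - (r - K).
  by apply: geodesic_point => //; apply/andP; split; lra.
have [c zc] := A_contr.1 z.
have ac : d a c <= K by apply: contracting_cproj_le pa zc; rewrite pz.
have := metric_triangle a c b.
have [s_large | s_small] := leP (3 * K) s.
  have : d b c <= K by apply: contracting_cproj_le qb zc; rewrite metric_sym zq; lra.
  rewrite metric_sym; lra.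
have := cproj_le_twice zc Ab; have := metric_triangle z q b; lra.
Qed.

Lemma setdist_gap_of_far_cproj (B : set X) y0 C p : 0 <= K -> is_geodesic d ->
  cproj d B p !=set0 ->
  (sdiam d ([set y0] `|` projset d A B) < C%:E)%E ->
  ((22 * K + 2 * C + 1)%:E <= sdiam d (cproj d A p `|` [set y0]))%E ->
  setdist d p A + K <= setdist d p B.
Proof.
move=> K0 geo [q [Bq pq]] BC far; rewrite leNgt; apply/negP; rewrite -pq => q_near.
have [b qb] := A_contr.1 q.
have by0 : d b y0 < C.
  rewrite -lte_fin; apply: le_lt_trans BC.
  by apply: sdiam_ge; [right; exists q | left].
have near_y0 u : cproj d A p u -> d u y0 <= 11 * K + C.
  move=> pu; have := contracting_cproj_near K0 geo q_near pu qb.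
  have := metric_triangle u b y0; lra.
have := le_trans far (sdiam_setU1_le _ near_y0).
rewrite lee_fin; have := metric_ge0 b y0; lra.
Qed.

End Contracting.
End MetricSpace.

Theorem lemma3p4 (R : realType) (C K : R) :
  0 < C -> 1 < K ->
  exists D : R, C < D /\
  forall (X : Type) (d : X -> X -> R),
    is_metric d -> is_geodesic d ->
  forall (kappa eta : R -> X) (Ik Ie : set R) (x x' y y' : X),
    contracting_axis d K Ik kappa x x' ->
    contracting_axis d K Ie eta y' y ->
    (sdiam d ([set x'] `|` projset d (kappa @` Ik) (eta @` Ie)) < C%:E)%E ->
    (sdiam d ([set y'] `|` projset d (eta @` Ie) (kappa @` Ik)) < C%:E)%E ->
  forall p : X,
    ~ ((D%:E <= sdiam d (cproj d (eta @` Ie) p `|` [set y']))%E /\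
       (D%:E <= sdiam d (cproj d (kappa @` Ik) p `|` [set x']))%E) /\
    ((D%:E <= sdiam d (cproj d (eta @` Ie) p `|` [set y']))%E ->
       setdist d p (eta @` Ie) + K <= setdist d p (kappa @` Ik)).
Proof.
move=> C0 K1; exists (22 * K + 2 * C + 1); split; first lra.
move=> X d dm geo kappa eta Ik Ie x x' y y' [_ [_ [_ [_ [_ [_ kappa_contr]]]]]]
  [_ [_ [_ [_ [_ [_ eta_contr]]]]]] kappaC etaC p.
have K0 : 0 <= K by lra.
have gap_eta := setdist_gap_of_far_cproj dm eta_contr K0 geo (kappa_contr.1 p) etaC.
have gap_kappa := setdist_gap_of_far_cproj dm kappa_contr K0 geo (eta_contr.1 p) kappaC.
split; last exact: gap_eta.
case=> /gap_eta eta_far /gap_kappa kappa_far.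
by clear gap_eta gap_kappa kappaC etaC; lra.
Qed.
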